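(* Let $\lambda>0$ and let $n\ge2$ be an integer. With the notation of the context, 1. $\displaystyle R_1(F)=\frac{e^{-n\lambda}}{2[1-e^{-\lambda}]^{n-1}}\int_0^1 I_0(2\lambda y)\,[e^{\lambda y}-1]^{n-2}\,dy+\frac{e^{-\lambda}+n-1}{2n(n-1)\lambda}-\frac{e^{-\lambda}}{(n-1)\lambda}$; 2. $\displaystyle R_\infty(F)=\frac{1-e^{-\lambda}}{n\lambda}$.
   Context: $P_\lambda(k)=\frac{1}{1-e^{-\lambda}}\frac{e^{-\lambda}\lambda^k}{k!}$, $k\ge1$, is the zero-truncated Poisson pmf. $X^*$ is a random variable with $\mathbb{P}(X^*=k)=e^{-\lambda}\lambda^{k-1}/(k-1)!$, $k\ge1$. For $x>0$ and real $s>0$, $H(x,s):=\frac{e^{-\lambda}}{1-e^{-\lambda}}\left\{\frac{\exp[\lambda e^{-x}]\,\Gamma(s,\lambda e^{-x})}{\Gamma(s)}-1\right\}$ (equal to $\sum_{k=1}^{s-1}e^{-xk}P_\lambda(k)$ for integer $s\ge1$), with $\Gamma(s,y)$ the upper incomplete gamma function. $\mathscr{L}_F(x)=\sum_{k\ge1}e^{-xk}P_\lambda(k)$. For $\varepsilon>0$, $R_\varepsilon(F)=\int_0^\infty\mathbb{E}\big[e^{-xX^*}H(x,\varepsilon X^* )\big]\,\mathscr{L}_F(x)^{n-2}\,dx$, and $R_1(F)=\int_0^\infty\lim_{\varepsilon\to1}\mathbb{E}[e^{-xX^*}H(x,\varepsilon X^* )]\mathscr{L}_F(x)^{n-2}dx$,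 $R_\infty(F)=\int_0^\infty\lim_{\varepsilon\to\infty}\mathbb{E}[e^{-xX^*}H(x,\varepsilon X^* )]\mathscr{L}_F(x)^{n-2}dx$. $I_0$ is the modified Bessel function of the first kind of order zero. *)

From Stdlib Require Import Reals.
From Coquelicot Require Import Coquelicot.
Open Scope R_scope.

(* zero-truncated Poisson pmf P_lambda(k), k >= 1 *)
Definition ztp (lam : R) (k : nat) : R :=
  / (1 - exp (- lam)) * (exp (- lam) * lam ^ k / INR (Factorial.fact k)).

(* P(X^star = k+1) = e^{-lambda} lambda^k / k!  (size-biased shift, index k >= 0) *)
Definition Xstar_pmf (lam : R) (k : nat) : R :=
  exp (- lam) * lam ^ k / INR (Factorial.fact k).

Definition Gamma_fn (s : R) : R :=
  RInt_gen (fun t => Rpower t (s - 1) * exp (- t)) (at_right 0) (Rbar_locally p_infty).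

Definition upper_inc_gamma (s y : R) : R :=
  RInt_gen (fun t => Rpower t (s - 1) * exp (- t)) (at_point y) (Rbar_locally p_infty).

Definition Hfun (lam x s : R) : R :=
  exp (- lam) / (1 - exp (- lam)) *
  (exp (lam * exp (- x)) * upper_inc_gamma s (lam * exp (- x)) / Gamma_fn s - 1).

Definition LF (lam x : R) : R :=
  Series (fun k => exp (- x * INR (S k)) * ztp lam (S k)).

(* E[ e^{-x Xs} H(x, eps Xs) ], Xs = X^star *)
Definition EH (lam eps x : R) : R :=
  Series (fun k => Xstar_pmf lam k * exp (- x * INR (S k)) * Hfun lam x (eps * INR (S k))).

Definition I0 (z : R) : R :=
  Series (fun k => (z / 2) ^ (2 * k) / (INR (Factorial.fact k)) ^ 2).

Definition R1_integrand (lam : R) (n : nat) (x : R) : R :=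
  real (Lim (fun eps => EH lam eps x) 1) * LF lam x ^ (n - 2).

Definition Rinf_integrand (lam : R) (n : nat) (x : R) : R :=
  real (Lim (fun eps => EH lam eps x) p_infty) * LF lam x ^ (n - 2).

(* Put [u = lam e^(-x)] and [c = e^(-lam) / (1 - e^(-lam))].  Then [L_F(x) = c (e^u - 1)], the
   weights [P(Xstar = k+1) e^(-x(k+1))] equal [(e^(-lam)/lam) u u^k/k!], and for integer [s = k+1]
   the incomplete gamma function is elementary: [H(x, k+1) = c (e_k(u) - 1)], where [e_k] is the
   [k]-th partial sum of the exponential series.  Both [Gamma(s)] and [Gamma(s, y)] are convex, hence
   continuous, in [s], and [Gamma(s, y) / Gamma(s) -> 1] as [s -> oo]; together with the uniform
   bound [|H| <= c (e^u + 1)], Tannery's theorem moves the limits in [eps] inside the series [EH].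
   For [eps -> 1] this produces [sum_k (u^k/k!) e_k(u) = (e^(2u) + I0(2u)) / 2], for [eps -> oo] the
   value [(e^(-lam)/lam) u e^u c (e^u - 1)].  The substitution [u = lam e^(-x)] then turns both
   improper integrals into integrals over [[0, lam]] of polynomials in [e^u - 1], plus one [I0] term
   rescaled to [[0, 1]], which are computed using [c (e^lam - 1) = 1]. *)

From Stdlib Require Import Reals Lra Lia Factorial.
From Coquelicot Require Import Coquelicot.
Open Scope R_scope.

#[local] Existing Instance Proper_StrongProper.

(** * Limits, series and convexity *)

Lemma Rabs_Series_sub_sum_le (c b : nat -> R) N :
  ex_series b -> (forall k, Rabs (c k) <= b k) ->
  Rabs (Series c - sum_f_R0 c N) <= Series b - sum_f_R0 b N.
Proof.
  intros Hb Hc.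
  assert (Hca : ex_series (fun k => Rabs (c k))).
  { apply (@ex_series_le R_AbsRing R_CompleteNormedModule _ b); auto.
    intros k. change (Rabs (Rabs (c k)) <= b k). rewrite Rabs_Rabsolu. auto. }
  rewrite (Series_incr_n c (S N)), (Series_incr_n b (S N))
    by (lia || apply ex_series_Rabs, Hca || exact Hb).
  simpl pred.
  replace (sum_f_R0 c N + Series (fun k => c (S N + k)%nat) - sum_f_R0 c N)
    with (Series (fun k => c (S N + k)%nat)) by ring.
  replace (sum_f_R0 b N + Series (fun k => b (S N + k)%nat) - sum_f_R0 b N)
    with (Series (fun k => b (S N + k)%nat)) by ring.
  eapply Rle_trans; [apply Series_Rabs, (ex_series_incr_n (fun k => Rabs (c k)) (S N)), Hca |].
  apply Series_le; [intros k; split; [apply Rabs_pos | apply Hc] |].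
  apply (ex_series_incr_n b (S N)), Hb.
Qed.

Section RealLimits.

Context {T : Type} (F : (T -> Prop) -> Prop) {FF : Filter F}.

Lemma filterlim_locally_R (f : T -> R) (l : R) :
  filterlim f F (locally l) <-> forall eps : posreal, F (fun x => Rabs (f x - l) < eps).
Proof. exact (filterlim_locally f l). Qed.

Lemma filterlim_Rplus (f g : T -> R) a b :
  filterlim f F (locally a) -> filterlim g F (locally b) ->
  filterlim (fun x => f x + g x) F (locally (a + b)).
Proof.
  intros Hf Hg. exact (filterlim_comp_2 f g Rplus Hf Hg (@filterlim_plus R_AbsRing R_NormedModule a b)).
Qed.

Lemma filterlim_Rmult (f g : T -> R) a b :
  filterlim f F (locally a) -> filterlim g F (locally b) ->
  filterlim (fun x => f x * g x) F (locally (a * b)).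
Proof. intros Hf Hg. exact (filterlim_comp_2 f g Rmult Hf Hg (@filterlim_mult R_AbsRing a b)). Qed.

Lemma filterlim_Rminus (f g : T -> R) a b :
  filterlim f F (locally a) -> filterlim g F (locally b) ->
  filterlim (fun x => f x - g x) F (locally (a - b)).
Proof.
  intros Hf Hg. apply filterlim_Rplus; [exact Hf |].
  exact (filterlim_comp _ _ _ g Ropp F _ _ Hg (@filterlim_opp R_AbsRing R_NormedModule b)).
Qed.

Lemma filterlim_continuous_comp (f : T -> R) (g : R -> R) a :
  continuous g a -> filterlim f F (locally a) -> filterlim (fun x => g (f x)) F (locally (g a)).
Proof. intros Hg Hf. exact (filterlim_comp _ _ _ f g F _ _ Hf Hg). Qed.

Lemma filterlim_Series_dominated (a : T -> nat -> R) (a0 b : nat -> R) :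
  ex_series b ->
  (forall k, filterlim (fun t => a t k) F (locally (a0 k))) ->
  F (fun t => forall k, Rabs (a t k) <= b k) ->
  (forall k, Rabs (a0 k) <= b k) ->
  filterlim (fun t => Series (a t)) F (locally (Series a0)).
Proof.
  intros Hb Hlim Hdom Hdom0.
  apply filterlim_locally_R. intros eps.
  assert (He3 : 0 < eps / 3) by (destruct eps; simpl; lra).
  assert (Hpartial : forall N, filterlim (fun t => sum_f_R0 (a t) N) F (locally (sum_f_R0 a0 N))).
  { induction N as [| N IH]; [apply Hlim | apply filterlim_Rplus; [apply IH | apply Hlim]]. }
  destruct (proj1 (is_series_Reals _ _) (Series_correct _ Hb) (eps / 3) He3) as [N HN].
  specialize (HN N (le_n N)). unfold R_dist in HN. rewrite Rabs_minus_sym in HN.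
  eapply filter_imp; [| exact (filter_and _ _ (proj1 (filterlim_locally_R _ _) (Hpartial N)
                                               (mkposreal _ He3)) Hdom)].
  intros t [Hsum Hdom_t]. simpl in Hsum.
  pose proof (Rabs_Series_sub_sum_le (a t) b N Hb Hdom_t).
  pose proof (Rabs_Series_sub_sum_le a0 b N Hb Hdom0). pose proof (Rle_abs (Series b - sum_f_R0 b N)).
  replace (Series (a t) - Series a0) with ((Series (a t) - sum_f_R0 (a t) N)
      - (Series a0 - sum_f_R0 a0 N) + (sum_f_R0 (a t) N - sum_f_R0 a0 N)) by ring.
  eapply Rle_lt_trans; [apply Rabs_triang |].
  eapply Rle_lt_trans; [apply Rplus_le_compat_r, Rabs_triang |].
  rewrite Rabs_Ropp. lra.
Qed.

End RealLimits.

Lemma filterlim_pinfty_0_of_bound (f : R -> R) C :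
  (forall t, 1 <= t -> Rabs (f t) <= C / t) ->
  filterlim f (Rbar_locally p_infty) (locally 0).
Proof.
  intros H. apply (filterlim_locally_R (Rbar_locally p_infty)). intros [e He].
  assert (HC : 0 <= C).
  { specialize (H 1 (Rle_refl 1)). pose proof (Rabs_pos (f 1)). unfold Rdiv in H.
    rewrite Rinv_1 in H. lra. }
  exists (Rmax 1 (2 * C / e)). intros x Hx.
  assert (H1 : 1 < x) by (eapply Rle_lt_trans; [apply Rmax_l | exact Hx]).
  assert (H2 : 2 * C / e < x) by (eapply Rle_lt_trans; [apply Rmax_r | exact Hx]).
  rewrite Rminus_0_r. eapply Rle_lt_trans; [apply H; lra |]. simpl.
  apply (Rmult_lt_reg_r x); [lra |]. unfold Rdiv. rewrite Rmult_assoc, Rinv_l, Rmult_1_r by lra.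
  apply (Rmult_lt_compat_l e) in H2; auto. unfold Rdiv in H2.
  replace (e * (2 * C * / e)) with (2 * C) in H2 by (field; lra). nra.
Qed.

Lemma filterlim_Rmult_pos_pinfty a : 0 < a ->
  filterlim (fun x => x * a) (Rbar_locally p_infty) (Rbar_locally p_infty).
Proof.
  intros Ha P [M HM]. exists (M / a). intros y Hy. apply HM.
  apply (Rmult_lt_compat_r a) in Hy; [| exact Ha].
  unfold Rdiv in Hy. rewrite Rmult_assoc, Rinv_l, Rmult_1_r in Hy; lra.
Qed.

Lemma at_right_0_intro (P : R -> Prop) (d : R) :
  0 < d -> (forall u, 0 < u < d -> P u) -> at_right 0 P.
Proof.
  intros Hd H. exists (mkposreal d Hd). intros y Hy Hy0. apply H.
  change (Rabs (y - 0) < d) in Hy. rewrite Rminus_0_r in Hy. apply Rabs_def2 in Hy. lra.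
Qed.

Lemma at_right_0_pos : at_right 0 (fun u => 0 < u).
Proof. apply (at_right_0_intro _ 1); [lra | tauto]. Qed.

Lemma filterlim_at_right_of_continuous (f : R -> R) x :
  continuous f x -> filterlim f (at_right x) (locally (f x)).
Proof. exact (filterlim_filter_le_1 f (@filter_le_within R (locally x) _ (fun u => x < u))). Qed.

Lemma continuous_of_ex_derive (f : R -> R) x : ex_derive f x -> continuous f x.
Proof. apply (ex_derive_continuous (K := R_AbsRing) (V := R_NormedModule)). Qed.

Lemma filterlim_at_point (f : R -> R) y : filterlim f (at_point y) (locally (f y)).
Proof. intros P HP. exact (locally_singleton _ _ HP). Qed.

Lemma ex_filterlim_of_oscillation_le {T} (F : (T -> Prop) -> Prop) {FF : ProperFilter F}
  (g h : T -> R) (P : T -> Prop) :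
  F P -> (forall u v, P u -> P v -> Rabs (g u - g v) <= Rabs (h u - h v)) ->
  (exists l, filterlim h F (locally l)) -> exists l, filterlim g F (locally l).
Proof.
  intros HP Hcmp Hh.
  apply (@filterlim_locally_cauchy T R_CompleteSpace F FF g).
  pose proof (proj2 (@filterlim_locally_cauchy T R_CompleteSpace F FF h) Hh) as Hc.
  intros eps. destruct (Hc eps) as [Q [HQ HQb]].
  exists (fun x => P x /\ Q x). split; [apply filter_and; auto |].
  intros u v [Pu Qu] [Pv Qv]. specialize (HQb u v Qu Qv).
  change (Rabs (g v - g u) < eps). change (Rabs (h v - h u) < eps) in HQb.
  rewrite Rabs_minus_sym. rewrite Rabs_minus_sym in HQb.
  eapply Rle_lt_trans; [apply Hcmp |]; auto.
Qed.

Definition convex_on (a b : R) (f : R -> R) : Prop :=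
  forall u v t, a < u < b -> a < v < b -> 0 <= t <= 1 ->
  f (t * u + (1 - t) * v) <= t * f u + (1 - t) * f v.

Lemma convex_on_reflect a b f : convex_on a b f -> convex_on (- b) (- a) (fun x => f (- x)).
Proof.
  intros Hc u v t Hu Hv Ht. replace (- (t * u + (1 - t) * v)) with (t * - u + (1 - t) * - v) by ring.
  apply Hc; lra.
Qed.

Lemma convex_on_increment_le a b f x0 d h :
  convex_on a b f -> 0 < d -> a < x0 - d -> x0 + d < b -> 0 <= h < d ->
  Rabs (f (x0 + h) - f x0) <= h / d * (Rabs (f (x0 - d) - f x0) + Rabs (f (x0 + d) - f x0)).
Proof.
  intros Hc Hd Ha Hb Hh.
  set (r := h / d).
  assert (Hr : 0 <= r < 1).
  { unfold r; split; [apply Rdiv_le_0_compat; lra |].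
    apply (Rmult_lt_reg_r d); [lra |]. unfold Rdiv. rewrite Rmult_assoc, Rinv_l; lra. }
  (* [x0 + h] lies on the chord from [x0] to [x0 + d], and [x0] on the chord from [x0 - d] to
     [x0 + h]. *)
  assert (Hup := Hc x0 (x0 + d) (1 - r) ltac:(lra) ltac:(lra) ltac:(lra)).
  replace ((1 - r) * x0 + (1 - (1 - r)) * (x0 + d)) with (x0 + h) in Hup by (unfold r; field; lra).
  assert (Hlow := Hc (x0 - d) (x0 + h) (r / (1 + r)) ltac:(lra) ltac:(lra)
                    ltac:(split; [apply Rdiv_le_0_compat | apply Rmult_le_reg_r with (1 + r);
                           [| unfold Rdiv; rewrite Rmult_assoc, Rinv_l]]; lra)).
  replace (r / (1 + r) * (x0 - d) + (1 - r / (1 + r)) * (x0 + h)) with x0 in Hlow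
    by (unfold r; field; lra).
  replace (1 - r / (1 + r)) with (/ (1 + r)) in Hlow by (field; lra).
  apply (Rmult_le_compat_l (1 + r)) in Hlow; [| lra].
  replace ((1 + r) * (r / (1 + r) * f (x0 - d) + / (1 + r) * f (x0 + h)))
    with (r * f (x0 - d) + f (x0 + h)) in Hlow by (field; lra).
  assert (H1 := Rmult_le_compat_l r _ _ (proj1 Hr) (Rle_abs (f (x0 - d) - f x0))).
  assert (H2 := Rmult_le_compat_l r _ _ (proj1 Hr) (Rle_abs (f (x0 + d) - f x0))).
  assert (0 <= r * Rabs (f (x0 - d) - f x0)) by (apply Rmult_le_pos; [lra | apply Rabs_pos]).
  assert (0 <= r * Rabs (f (x0 + d) - f x0)) by (apply Rmult_le_pos; [lra | apply Rabs_pos]).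
  apply Rabs_le; split; nra.
Qed.

Lemma continuous_of_Lipschitz_at (f : R -> R) x0 d M :
  0 < d -> (forall h, Rabs h < d -> Rabs (f (x0 + h) - f x0) <= M * Rabs h) -> continuous f x0.
Proof.
  intros Hd Hf. apply (filterlim_locally_R (locally x0)). intros [e He].
  set (M' := Rabs M + 1).
  assert (HM' : 0 < M') by (unfold M'; pose proof (Rabs_pos M); lra).
  assert (Hdelta : 0 < Rmin d (e / M')) by (apply Rmin_glb_lt; [| apply Rdiv_lt_0_compat]; lra).
  exists (mkposreal _ Hdelta). intros x Hx. change R in x.
  change (Rabs (x - x0) < Rmin d (e / M')) in Hx.
  assert (Hx1 : Rabs (x - x0) < d) by (eapply Rlt_le_trans; [exact Hx | apply Rmin_l]).
  assert (Hx2 : Rabs (x - x0) * M' < e).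
  { apply (Rmult_lt_reg_r (/ M')); [apply Rinv_0_lt_compat, HM' |].
    rewrite Rmult_assoc, Rinv_r, Rmult_1_r by lra. eapply Rlt_le_trans; [exact Hx | apply Rmin_r]. }
  specialize (Hf (x - x0) Hx1). replace (x0 + (x - x0)) with x in Hf by ring. simpl.
  pose proof (Rle_abs M). pose proof (Rabs_pos (x - x0)). unfold M' in Hx2. nra.
Qed.

Lemma convex_on_continuous a b f x0 : convex_on a b f -> a < x0 < b -> continuous f x0.
Proof.
  intros Hc Hx0.
  set (d := Rmin (x0 - a) (b - x0) / 2).
  assert (Hd : 0 < d) by (unfold d; apply Rmin_case; lra).
  assert (Hda : d < x0 - a) by (pose proof (Rmin_l (x0 - a) (b - x0)); unfold d; lra).
  assert (Hdb : d < b - x0) by (pose proof (Rmin_r (x0 - a) (b - x0)); unfold d; lra).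
  apply (continuous_of_Lipschitz_at f x0 d
           ((Rabs (f (x0 - d) - f x0) + Rabs (f (x0 + d) - f x0)) / d) Hd).
  intros h Hh. destruct (Rle_or_lt 0 h) as [Hh0 | Hh0].
  - rewrite (Rabs_right h) in Hh |- * by lra.
    replace (_ / d * h) with (h / d * (Rabs (f (x0 - d) - f x0) + Rabs (f (x0 + d) - f x0)))
      by (field; lra).
    apply (convex_on_increment_le a b); auto; lra.
  - rewrite (Rabs_left h) in Hh |- * by lra.
    pose proof (convex_on_increment_le _ _ _ (- x0) d (- h) (convex_on_reflect _ _ _ Hc)
                  Hd ltac:(lra) ltac:(lra) ltac:(lra)) as H.
    cbv beta in H. rewrite !Ropp_involutive in H. replace (- (- x0 + - h)) with (x0 + h) in H by ring.
    replace (- (- x0 - d)) with (x0 + d) in H by ring. replace (- (- x0 + d)) with (x0 - d) in H by ring.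
    eapply Rle_trans; [exact H |]. right. field. lra.
Qed.

(** * Improper integrals *)

Lemma Rmin_glb_lt_le z a b x : z < a -> z < b -> Rmin a b <= x -> z < x.
Proof. intros Ha Hb Hx. apply Rlt_le_trans with (Rmin a b); [apply Rmin_glb_lt |]; assumption. Qed.

Lemma ex_RInt_of_continuous_gt (f : R -> R) z a b :
  z < a -> z < b -> (forall t, z < t -> continuous f t) -> ex_RInt f a b.
Proof.
  intros Ha Hb Hc. apply (@ex_RInt_continuous R_CompleteNormedModule).
  intros t Ht. apply Hc, (Rmin_glb_lt_le z a b); tauto.
Qed.

Lemma Rabs_RInt_le_Rabs_RInt (f g : R -> R) u v : ex_RInt f u v -> ex_RInt g u v ->
  (forall t, Rmin u v <= t <= Rmax u v -> 0 <= f t <= g t) -> Rabs (RInt f u v) <= Rabs (RInt g u v).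
Proof.
  intros Hf Hg H. destruct (Rle_or_lt u v) as [Huv | Huv].
  - rewrite Rmin_left, Rmax_right in H by lra.
    assert (0 <= RInt f u v) by (apply RInt_ge_0; auto; intros; apply H; lra).
    assert (RInt f u v <= RInt g u v) by (apply RInt_le; auto; intros; apply H; lra).
    rewrite !Rabs_right; lra.
  - rewrite Rmin_right, Rmax_left in H by lra.
    apply ex_RInt_swap in Hf. apply ex_RInt_swap in Hg.
    rewrite <- (opp_RInt_swap f v u Hf), <- (opp_RInt_swap g v u Hg).
    assert (0 <= RInt f v u) by (apply RInt_ge_0; auto; try lra; intros; apply H; lra).
    assert (RInt f v u <= RInt g v u) by (apply RInt_le; auto; try lra; intros; apply H; lra).
    change (Rabs (- RInt f v u) <= Rabs (- RInt g v u)). rewrite !Rabs_Ropp, !Rabs_right; lra.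
Qed.

Lemma ex_filterlim_RInt_of_dominated (F : (R -> Prop) -> Prop) {FF : ProperFilter F}
  (f g : R -> R) z c :
  z < c -> F (fun u => z < u) ->
  (forall t, z < t -> continuous f t) -> (forall t, z < t -> continuous g t) ->
  (forall t, z < t -> 0 <= f t <= g t) ->
  (exists l, filterlim (fun u => RInt g c u) F (locally l)) ->
  exists l, filterlim (fun u => RInt f c u) F (locally l).
Proof.
  intros Hc HF Hf Hg Hfg.
  apply (ex_filterlim_of_oscillation_le F _ _ _ HF). intros u v Hu Hv.
  assert (Hdiff : forall h, (forall t, z < t -> continuous h t) -> RInt h c u - RInt h c v = RInt h v u).
  { intros h Hh. rewrite <- (RInt_Chasles h c v u) by (apply (ex_RInt_of_continuous_gt h z); auto).
    change (RInt h c v + RInt h v u) with (plus (RInt h c v) (RInt h v u)). cbn. ring. }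
  rewrite !Hdiff by assumption.
  apply Rabs_RInt_le_Rabs_RInt;
    [apply (ex_RInt_of_continuous_gt f z) | apply (ex_RInt_of_continuous_gt g z) |]; auto.
  intros t Ht. apply Hfg, (Rmin_glb_lt_le z v u); tauto.
Qed.

Lemma is_RInt_gen_of_lim_lower (f : R -> R) (Fa : (R -> Prop) -> Prop) {FF : Filter Fa} b l :
  Fa (fun u => ex_RInt f u b) -> filterlim (fun u => RInt f u b) Fa (locally l) ->
  is_RInt_gen f Fa (at_point b) l.
Proof.
  intros Hex Hl.
  apply (filterlimi_lim_ext_loc (fun ab => RInt f (fst ab) (snd ab))).
  - apply (Filter_prod _ _ _ _ (fun y => y = b) Hex (eq_refl b)).
    intros x y Hx ->. apply (@RInt_correct R_CompleteNormedModule), Hx.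
  - apply (filterlim_ext_loc (fun ab => RInt f (fst ab) b)).
    + apply (Filter_prod _ _ _ (fun _ => True) (fun y => y = b)); [apply filter_true | reflexivity |].
      intros x y _ ->; reflexivity.
    + exact (filterlim_comp _ _ _ fst (fun u => RInt f u b) _ Fa _ filterlim_fst Hl).
Qed.

Lemma is_RInt_gen_of_lim_upper (f : R -> R) (Fb : (R -> Prop) -> Prop) {FF : Filter Fb} a l :
  Fb (fun v => ex_RInt f a v) -> filterlim (fun v => RInt f a v) Fb (locally l) ->
  is_RInt_gen f (at_point a) Fb l.
Proof.
  intros Hex Hl.
  apply (filterlimi_lim_ext_loc (fun ab => RInt f (fst ab) (snd ab))).
  - apply (Filter_prod _ _ _ (fun y => y = a) _ (eq_refl a) Hex).
    intros x y -> Hy. apply (@RInt_correct R_CompleteNormedModule), Hy.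
  - apply (filterlim_ext_loc (fun ab => RInt f a (snd ab))).
    + apply (Filter_prod _ _ _ (fun y => y = a) (fun _ => True)); [reflexivity | apply filter_true |].
      intros x y -> _; reflexivity.
    + exact (filterlim_comp _ _ _ snd (fun v => RInt f a v) _ Fb _ filterlim_snd Hl).
Qed.

Lemma is_RInt_gen_of_antiderivative (F f : R -> R) (Fa Fb : (R -> Prop) -> Prop)
  {FFa : Filter Fa} {FFb : Filter Fb} la lb :
  Fa (fun a => 0 < a) -> Fb (fun b => 0 < b) ->
  (forall x, 0 < x -> is_derive F x (f x)) -> (forall x, 0 < x -> continuous f x) ->
  filterlim F Fa (locally la) -> filterlim F Fb (locally lb) ->
  is_RInt_gen f Fa Fb (lb - la).
Proof.
  intros Ha Hb HD HC HLa HLb.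
  apply (filterlimi_lim_ext_loc (fun ab => F (snd ab) - F (fst ab))).
  - apply (Filter_prod _ _ _ _ _ Ha Hb). intros a b Hpa Hpb.
    apply (is_RInt_derive F f); intros x Hx; [apply HD | apply HC]; apply (Rmin_glb_lt_le 0 a b); tauto.
  - apply (filterlim_Rminus (filter_prod Fa Fb)).
    + exact (filterlim_comp _ _ _ snd F _ Fb _ filterlim_snd HLb).
    + exact (filterlim_comp _ _ _ fst F _ Fa _ filterlim_fst HLa).
Qed.

Lemma filter_prod_at_right_0_pinfty :
  filter_prod (at_right 0) (Rbar_locally p_infty) (fun ab => 0 < fst ab <= snd ab).
Proof.
  apply (Filter_prod _ _ _ (fun a => 0 < a < 1) (fun b => 1 < b)).
  - apply (at_right_0_intro _ 1); [lra | auto].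
  - exists 1; auto.
  - simpl; intros; lra.
Qed.

Lemma filter_prod_at_point_pinfty y : 0 < y ->
  filter_prod (at_point y) (Rbar_locally p_infty) (fun ab => 0 < fst ab <= snd ab).
Proof.
  intros Hy. apply (Filter_prod _ _ _ (fun a => a = y) (fun b => y < b));
    [reflexivity | exists y; auto |].
  simpl; intros; lra.
Qed.

Lemma filter_prod_at_right_0_at_point y : 0 < y ->
  filter_prod (at_right 0) (at_point y) (fun ab => 0 < fst ab <= snd ab).
Proof.
  intros Hy. apply (Filter_prod _ _ _ (fun a => 0 < a < y) (fun b => b = y)).
  - apply (at_right_0_intro _ y); [lra | auto].
  - reflexivity.
  - simpl; intros; lra.
Qed.

Section ImproperIntegralComparison.

Context (Fa Fb : (R -> Prop) -> Prop) {FFa : ProperFilter Fa} {FFb : ProperFilter Fb}.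
Hypothesis Hpos : filter_prod Fa Fb (fun ab => 0 < fst ab <= snd ab).

Lemma is_RInt_gen_le (f g : R -> R) lf lg :
  (forall x, 0 < x -> 0 <= f x <= g x) ->
  is_RInt_gen f Fa Fb lf -> is_RInt_gen g Fa Fb lg -> lf <= lg.
Proof.
  intros Hfg Hf Hg. eapply Rle_trans; [apply Rle_abs |].
  apply (@RInt_gen_norm R_CompleteNormedModule Fa Fb FFa FFb f g lf lg); auto.
  - refine (filter_imp _ _ _ Hpos). intros ab H. lra.
  - refine (filter_imp _ _ _ Hpos). intros ab H x Hx.
    specialize (Hfg x ltac:(lra)). change (Rabs (f x) <= g x). rewrite Rabs_right; lra.
Qed.

Lemma is_RInt_gen_ge_0 (f : R -> R) lf :
  (forall x, 0 < x -> 0 <= f x) -> is_RInt_gen f Fa Fb lf -> 0 <= lf.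
Proof.
  intros Hf Hl. rewrite <- (Rmult_0_l lf).
  apply (is_RInt_gen_le (fun y => 0 * f y) f); [| exact (is_RInt_gen_scal _ 0 _ Hl) | exact Hl].
  intros x Hx. specialize (Hf x Hx). lra.
Qed.

End ImproperIntegralComparison.

Lemma is_RInt_gen_comp_exp_neg (psi : R -> R) c : (forall u, continuous psi u) ->
  is_RInt_gen (fun x => psi (c * exp (- x)) * (c * exp (- x))) (at_right 0) (Rbar_locally p_infty)
    (RInt psi 0 c).
Proof.
  intros Hc.
  set (Psi := fun v => RInt psi 0 v).
  assert (HD : forall v, is_derive Psi v (psi v)).
  { intros v. apply (is_derive_RInt psi Psi 0 v); [| apply Hc].
    exists (mkposreal 1 Rlt_0_1). intros b _. apply (@RInt_correct R_CompleteNormedModule).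
    apply (@ex_RInt_continuous R_CompleteNormedModule). intros; apply Hc. }
  set (G := fun x => - Psi (c * exp (- x))).
  assert (HG : forall x, is_derive G x (psi (c * exp (- x)) * (c * exp (- x)))).
  { intros x. unfold G.
    replace (psi (c * exp (- x)) * (c * exp (- x)))
      with (opp (scal (- (c * exp (- x))) (psi (c * exp (- x))))) by (cbn; ring).
    apply (is_derive_opp (fun x => Psi (c * exp (- x)))).
    apply (is_derive_comp Psi (fun x => c * exp (- x))); [apply HD | auto_derive; auto; ring]. }
  replace (Psi c) with (0 - G 0)
    by (unfold G, Psi; rewrite Ropp_0, exp_0, Rmult_1_r; ring).
  apply (is_RInt_gen_of_antiderivative G _ (at_right 0) (Rbar_locally p_infty));
    [apply at_right_0_pos | exists 0; auto | intros; apply HG | | |].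
  - intros x _. apply (continuous_mult (fun x => psi (c * exp (- x))) (fun x => c * exp (- x))).
    + apply (continuous_comp (fun x => c * exp (- x)) psi); [| apply Hc].
      apply continuous_of_ex_derive. auto_derive. auto.
    + apply continuous_of_ex_derive. auto_derive. auto.
  - apply filterlim_at_right_of_continuous, continuous_of_ex_derive.
    eexists; apply HG.
  - replace 0 with (- Psi 0) by (unfold Psi; rewrite RInt_point; apply Ropp_0).
    apply (filterlim_continuous_comp (Rbar_locally p_infty) (fun x => c * exp (- x)) (fun v => - Psi v)).
    + apply continuous_of_ex_derive. eexists.
      apply (is_derive_opp Psi), HD.
    + apply (filterlim_pinfty_0_of_bound _ (Rabs c)). intros t Ht.
      rewrite Rabs_mult, (Rabs_right (exp (- t))) by (apply Rle_ge, Rlt_le, exp_pos).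
      rewrite exp_Ropp. apply Rmult_le_compat_l; [apply Rabs_pos |].
      apply Rinv_le_contravar; [lra |]. pose proof (exp_ineq1_le t). lra.
Qed.

(** * The gamma function *)

Definition gamma_kernel (s t : R) : R := Rpower t (s - 1) * exp (- t).

Definition lower_inc_gamma (s y : R) : R := Gamma_fn s - upper_inc_gamma s y.

Lemma is_derive_Rpower_l a t : 0 < t -> is_derive (fun x => Rpower x a) t (a * Rpower t (a - 1)).
Proof. intros Ht. apply is_derive_Reals, derivable_pt_lim_power, Ht. Qed.

Lemma continuous_Rpower_l a t : 0 < t -> continuous (fun x => Rpower x a) t.
Proof.
  intros Ht. apply continuous_of_ex_derive.
  eexists. apply is_derive_Rpower_l, Ht.
Qed.

Lemma gamma_kernel_pos s t : 0 < gamma_kernel s t.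
Proof. apply Rmult_lt_0_compat; apply exp_pos. Qed.

Lemma gamma_kernel_continuous s t : 0 < t -> continuous (gamma_kernel s) t.
Proof.
  intros Ht. apply (continuous_mult (fun x => Rpower x (s - 1)) (fun x => exp (- x))).
  - apply continuous_Rpower_l, Ht.
  - apply continuous_of_ex_derive. auto_derive. auto.
Qed.

Lemma gamma_kernel_le_Rpower s t : 0 < t -> gamma_kernel s t <= Rpower t (s - 1).
Proof.
  intros Ht. unfold gamma_kernel. rewrite <- (Rmult_1_r (Rpower t (s - 1))) at 2.
  apply Rmult_le_compat_l; [apply Rlt_le, exp_pos |].
  rewrite <- exp_0. apply Rlt_le, exp_increasing. lra.
Qed.

Lemma gamma_kernel_nat k t : 0 < t -> gamma_kernel (INR (S k)) t = exp (- t) * t ^ k.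
Proof.
  intros Ht. unfold gamma_kernel. rewrite S_INR. replace (INR k + 1 - 1) with (INR k) by ring.
  rewrite Rpower_pow by exact Ht. ring.
Qed.

Lemma filterlim_Rpower_at_right_0 s : 0 < s -> filterlim (fun u => Rpower u s) (at_right 0) (locally 0).
Proof.
  intros Hs. apply (filterlim_locally_R (at_right 0)). intros eps.
  apply (at_right_0_intro _ (Rpower eps (/ s))); [apply exp_pos |].
  intros u [Hu1 Hu2]. rewrite Rminus_0_r, Rabs_right by (apply Rle_ge, Rlt_le, exp_pos).
  replace (pos eps) with (Rpower (Rpower eps (/ s)) s)
    by (rewrite Rpower_mult, Rinv_l, Rpower_1 by (destruct eps; simpl; lra); reflexivity).
  apply Rlt_Rpower_l; auto.
Qed.

Lemma filterlim_RInt_Rpower_at_right_0 s b : 0 < s -> 0 < b ->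
  filterlim (fun u => RInt (fun t => Rpower t (s - 1)) u b) (at_right 0) (locally (Rpower b s / s)).
Proof.
  intros Hs Hb.
  apply (filterlim_ext_loc (fun u => Rpower b s / s - Rpower u s / s)).
  - refine (filter_imp _ _ _ at_right_0_pos). intros u Hu. symmetry. apply is_RInt_unique.
    apply (is_RInt_derive (fun t => Rpower t s / s)); intros x Hx;
      assert (0 < x) by (apply (Rmin_glb_lt_le 0 u b); tauto).
    + replace (Rpower x (s - 1)) with (/ s * (s * Rpower x (s - 1))) by (field; lra).
      apply (is_derive_ext (fun t => / s * Rpower t s)); [intros; apply Rmult_comm |].
      apply is_derive_scal, is_derive_Rpower_l. auto.
    + apply continuous_Rpower_l. auto.
  - assert (Hu0 := filterlim_Rpower_at_right_0 s Hs).
    pose proof (filterlim_Rminus (at_right 0) _ _ _ _ (filterlim_const (Rpower b s / s))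
                  (filterlim_Rmult (at_right 0) _ _ _ _ Hu0 (filterlim_const (/ s)))) as H.
    rewrite Rmult_0_l, Rminus_0_r in H. exact H.
Qed.

Lemma ex_RInt_gen_gamma_kernel_at_right_0 s b : 0 < s -> 0 < b ->
  ex_RInt_gen (gamma_kernel s) (at_right 0) (at_point b).
Proof.
  intros Hs Hb.
  assert (Hpow : exists l,
             filterlim (fun u => RInt (fun t => Rpower t (s - 1)) b u) (at_right 0) (locally l)).
  { exists (- (Rpower b s / s)).
    apply (filterlim_ext_loc (fun u => - RInt (fun t => Rpower t (s - 1)) u b)).
    - refine (filter_imp _ _ _ at_right_0_pos). intros u Hu.
      apply (@opp_RInt_swap R_CompleteNormedModule).
      apply (ex_RInt_of_continuous_gt _ 0); auto. intros; apply continuous_Rpower_l; auto.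
    - apply (filterlim_comp _ _ _ _ Ropp _ _ _ (filterlim_RInt_Rpower_at_right_0 s b Hs Hb)).
      apply (@filterlim_opp R_AbsRing R_NormedModule). }
  destruct (ex_filterlim_RInt_of_dominated (at_right 0) (gamma_kernel s) (fun t => Rpower t (s - 1)) 0 b
              Hb at_right_0_pos ltac:(intros; apply gamma_kernel_continuous; auto)
              ltac:(intros; apply continuous_Rpower_l; auto)
              ltac:(intros; split; [apply Rlt_le, gamma_kernel_pos | apply gamma_kernel_le_Rpower; lra])
              Hpow) as [l Hl].
  exists (- l). apply (is_RInt_gen_of_lim_lower _ (at_right 0)).
  - refine (filter_imp _ _ _ at_right_0_pos). intros u Hu.
    apply (ex_RInt_of_continuous_gt _ 0); auto. intros; apply gamma_kernel_continuous; auto.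
  - apply (filterlim_ext_loc (fun u => - RInt (gamma_kernel s) b u)).
    + refine (filter_imp _ _ _ at_right_0_pos). intros u Hu.
      apply (@opp_RInt_swap R_CompleteNormedModule).
      apply (ex_RInt_of_continuous_gt _ 0); auto. intros; apply gamma_kernel_continuous; auto.
    + apply (filterlim_comp _ _ _ _ Ropp _ _ _ Hl), (@filterlim_opp R_AbsRing R_NormedModule).
Qed.

Lemma pow_div_fact_le_exp x n : 0 <= x -> x ^ n / INR (fact n) <= exp x.
Proof.
  intros Hx. eapply Rle_trans; [| apply (exp_ge_taylor x n Hx)].
  destruct n as [| n]; [simpl; lra |].
  rewrite tech5. enough (0 <= sum_f_R0 (fun k => x ^ k / INR (fact k)) n) by lra.
  apply cond_pos_sum. intros k. apply Rdiv_le_0_compat; [apply pow_le, Hx | apply lt_0_INR, lt_O_fact].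
Qed.

Lemma pow_mul_exp_neg_le k j t : 0 < t -> t ^ k * exp (- t) <= INR (fact (k + j)) / t ^ j.
Proof.
  intros Ht.
  assert (Hf : 0 < INR (fact (k + j))) by apply lt_0_INR, lt_O_fact.
  assert (Htj : 0 < t ^ j) by (apply pow_lt, Ht).
  replace (t ^ k * exp (- t))
    with (t ^ (k + j) / INR (fact (k + j)) * exp (- t) * (INR (fact (k + j)) / t ^ j))
    by (rewrite pow_add; field; lra).
  replace (INR (fact (k + j)) / t ^ j) with (exp t * exp (- t) * (INR (fact (k + j)) / t ^ j)) at 2
    by (rewrite <- exp_plus, Rplus_opp_r, exp_0; ring).
  apply Rmult_le_compat_r; [apply Rdiv_le_0_compat; lra |].
  apply Rmult_le_compat_r; [apply Rlt_le, exp_pos |]. apply pow_div_fact_le_exp. lra.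
Qed.

Lemma gamma_kernel_le_inv_sq s N t : s - 1 <= INR N -> 1 <= t ->
  gamma_kernel s t <= INR (fact (N + 2)) / t ^ 2.
Proof.
  intros HN Ht. eapply Rle_trans; [| apply pow_mul_exp_neg_le; lra].
  apply Rmult_le_compat_r; [apply Rlt_le, exp_pos |].
  rewrite <- Rpower_pow by lra. apply Rle_Rpower; assumption.
Qed.

Lemma is_RInt_inv_sq K a v : 0 < a -> 0 < v -> is_RInt (fun t => K / t ^ 2) a v (K / a - K / v).
Proof.
  intros Ha Hv. replace (K / a - K / v) with (minus (- K / v) (- K / a)) by (cbn; field; lra).
  apply (is_RInt_derive (fun t => - K / t)); intros x Hx;
    assert (0 < x) by (apply (Rmin_glb_lt_le 0 a v); tauto).
  - auto_derive; [lra | field; lra].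
  - apply continuous_of_ex_derive. auto_derive. nra.
Qed.

Lemma ex_RInt_gen_gamma_kernel_pinfty s y : 0 < y ->
  ex_RInt_gen (gamma_kernel s) (at_point y) (Rbar_locally p_infty).
Proof.
  intros Hy. destruct (INR_unbounded (s - 1)) as [N HN].
  set (K := INR (fact (N + 2))).
  assert (Hgt1 : Rbar_locally p_infty (fun v => 1 < v)) by (exists 1; auto).
  assert (Hlim : exists l,
             filterlim (fun v => RInt (fun t => K / t ^ 2) 2 v) (Rbar_locally p_infty) (locally l)).
  { exists (K / 2 - 0). apply (filterlim_ext_loc (fun v => K / 2 - K / v)).
    - refine (filter_imp _ _ _ Hgt1). intros v Hv. symmetry. apply is_RInt_unique, is_RInt_inv_sq; lra.
    - apply (filterlim_Rminus (Rbar_locally p_infty)); [apply filterlim_const |].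
      apply (filterlim_pinfty_0_of_bound _ (Rabs K)). intros t Ht.
      unfold Rdiv. rewrite Rabs_mult, Rabs_inv, (Rabs_right t) by lra. apply Rle_refl. }
  destruct (ex_filterlim_RInt_of_dominated _ (gamma_kernel s) (fun t => K / t ^ 2) 1 2 ltac:(lra) Hgt1)
    as [l Hl]; [intros; apply gamma_kernel_continuous; lra | | | exact Hlim |].
  - intros t Ht. apply continuous_of_ex_derive. auto_derive. nra.
  - intros t Ht. split; [apply Rlt_le, gamma_kernel_pos | apply gamma_kernel_le_inv_sq; lra].
  - apply (ex_RInt_gen_Chasles _ 2).
    + apply (ex_RInt_gen_at_point (V := R_CompleteNormedModule)).
      apply (ex_RInt_of_continuous_gt _ 0); try lra.
      intros; apply gamma_kernel_continuous; lra.
    + exists l. refine (is_RInt_gen_of_lim_upper _ _ _ _ _ Hl).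
      refine (filter_imp _ _ _ Hgt1). intros v Hv.
      apply (ex_RInt_of_continuous_gt _ 0); try lra. intros; apply gamma_kernel_continuous; lra.
Qed.

Lemma is_RInt_gen_Gamma_fn s : 0 < s ->
  is_RInt_gen (gamma_kernel s) (at_right 0) (Rbar_locally p_infty) (Gamma_fn s).
Proof.
  intros Hs. apply (RInt_gen_correct (V := R_CompleteNormedModule)), (ex_RInt_gen_Chasles _ 1).
  - apply ex_RInt_gen_gamma_kernel_at_right_0; lra.
  - apply ex_RInt_gen_gamma_kernel_pinfty; lra.
Qed.

Lemma is_RInt_gen_upper_inc_gamma s y : 0 < y ->
  is_RInt_gen (gamma_kernel s) (at_point y) (Rbar_locally p_infty) (upper_inc_gamma s y).
Proof.
  intros Hy. apply (RInt_gen_correct (V := R_CompleteNormedModule)), ex_RInt_gen_gamma_kernel_pinfty, Hy.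
Qed.

Lemma is_RInt_gen_lower_inc_gamma s y : 0 < s -> 0 < y ->
  is_RInt_gen (gamma_kernel s) (at_right 0) (at_point y) (lower_inc_gamma s y).
Proof.
  intros Hs Hy.
  assert (Hlow := ex_RInt_gen_gamma_kernel_at_right_0 s y Hs Hy).
  replace (lower_inc_gamma s y) with (RInt_gen (gamma_kernel s) (at_right 0) (at_point y)).
  - apply (RInt_gen_correct (V := R_CompleteNormedModule)), Hlow.
  - unfold lower_inc_gamma.
    change (Gamma_fn s) with (RInt_gen (gamma_kernel s) (at_right 0) (Rbar_locally p_infty)).
    change (upper_inc_gamma s y) with (RInt_gen (gamma_kernel s) (at_point y) (Rbar_locally p_infty)).
    rewrite <- (RInt_gen_Chasles (gamma_kernel s) y Hlow (ex_RInt_gen_gamma_kernel_pinfty s y Hy)).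
    cbn. ring.
Qed.

Lemma upper_inc_gamma_ge_0 s y : 0 < y -> 0 <= upper_inc_gamma s y.
Proof.
  intros Hy. apply (is_RInt_gen_ge_0 _ _ (filter_prod_at_point_pinfty y Hy) (gamma_kernel s)).
  - intros; apply Rlt_le, gamma_kernel_pos.
  - apply is_RInt_gen_upper_inc_gamma, Hy.
Qed.

Lemma lower_inc_gamma_ge_0 s y : 0 < s -> 0 < y -> 0 <= lower_inc_gamma s y.
Proof.
  intros Hs Hy. apply (is_RInt_gen_ge_0 _ _ (filter_prod_at_right_0_at_point y Hy) (gamma_kernel s)).
  - intros; apply Rlt_le, gamma_kernel_pos.
  - apply is_RInt_gen_lower_inc_gamma; assumption.
Qed.

Lemma lower_inc_gamma_le s y : 0 < s -> 0 < y -> lower_inc_gamma s y <= Rpower y s / s.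
Proof.
  intros Hs Hy.
  apply (is_RInt_gen_le _ _ (filter_prod_at_right_0_at_point y Hy)
           (gamma_kernel s) (fun t => Rpower t (s - 1))).
  - intros t Ht. split; [apply Rlt_le, gamma_kernel_pos | apply gamma_kernel_le_Rpower, Ht].
  - apply is_RInt_gen_lower_inc_gamma; assumption.
  - apply (is_RInt_gen_of_lim_lower _ (at_right 0));
      [| apply filterlim_RInt_Rpower_at_right_0; assumption].
    refine (filter_imp _ _ _ at_right_0_pos). intros u Hu.
    apply (ex_RInt_of_continuous_gt _ 0); auto. intros; apply continuous_Rpower_l; assumption.
Qed.

Lemma RInt_gamma_kernel_le_upper_inc_gamma s y z : 0 < y < z ->
  RInt (gamma_kernel s) y z <= upper_inc_gamma s y.
Proof.
  intros Hyz.
  assert (Hex : ex_RInt (gamma_kernel s) y z)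
    by (apply (ex_RInt_of_continuous_gt _ 0); try lra; intros; apply gamma_kernel_continuous; lra).
  pose proof (is_RInt_gen_Chasles (Fa := at_point y) (Fc := Rbar_locally p_infty) (gamma_kernel s) z _ _
                (proj2 (is_RInt_gen_at_point _ _ _ _) (RInt_correct _ _ _ Hex))
                (is_RInt_gen_upper_inc_gamma s z ltac:(lra))) as H.
  change (upper_inc_gamma s y) with (RInt_gen (gamma_kernel s) (at_point y) (Rbar_locally p_infty)).
  rewrite (is_RInt_gen_unique _ _ H).
  change (RInt (gamma_kernel s) y z <= RInt (gamma_kernel s) y z + upper_inc_gamma s z).
  pose proof (upper_inc_gamma_ge_0 s z ltac:(lra)). lra.
Qed.

Lemma upper_inc_gamma_le_Gamma_fn s y : 0 < s -> 0 < y -> upper_inc_gamma s y <= Gamma_fn s.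
Proof. intros Hs Hy. pose proof (lower_inc_gamma_ge_0 s y Hs Hy). unfold lower_inc_gamma in *. lra. Qed.

Lemma Gamma_fn_pos s : 0 < s -> 0 < Gamma_fn s.
Proof.
  intros Hs. apply Rlt_le_trans with (RInt (gamma_kernel s) 1 2).
  - apply RInt_gt_0; [lra | intros; apply gamma_kernel_pos | intros; apply gamma_kernel_continuous; lra].
  - eapply Rle_trans; [apply RInt_gamma_kernel_le_upper_inc_gamma; lra |].
    apply upper_inc_gamma_le_Gamma_fn; lra.
Qed.

Lemma Gamma_fn_ge s y : 1 <= s -> 0 < y -> Rpower y (s - 1) * exp (- (y + 1)) <= Gamma_fn s.
Proof.
  intros Hs Hy. eapply Rle_trans; [| apply (upper_inc_gamma_le_Gamma_fn s y); lra].
  eapply Rle_trans; [| apply (RInt_gamma_kernel_le_upper_inc_gamma s y (y + 1)); lra].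
  replace (Rpower y (s - 1) * exp (- (y + 1)))
    with (RInt (fun _ => Rpower y (s - 1) * exp (- (y + 1))) y (y + 1))
    by (rewrite RInt_const; cbn; ring).
  apply RInt_le; [lra | apply ex_RInt_const | |].
  { apply (ex_RInt_of_continuous_gt _ 0); try lra. intros; apply gamma_kernel_continuous; lra. }
  intros t Ht. apply Rmult_le_compat; try (apply Rlt_le, exp_pos).
  - apply Rle_Rpower_l; lra.
  - apply Rlt_le, exp_increasing. lra.
Qed.

Lemma upper_inc_gamma_div_Gamma_fn_bounds s y : 0 < s -> 0 < y ->
  0 <= upper_inc_gamma s y / Gamma_fn s <= 1.
Proof.
  intros Hs Hy. pose proof (Gamma_fn_pos s Hs). pose proof (upper_inc_gamma_ge_0 s y Hy).
  pose proof (upper_inc_gamma_le_Gamma_fn s y Hs Hy).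
  split; [apply Rdiv_le_0_compat; lra |].
  apply (Rmult_le_reg_r (Gamma_fn s)); [lra |]. unfold Rdiv. rewrite Rmult_assoc, Rinv_l; lra.
Qed.

(* The lower part [lower_inc_gamma s y <= y^s / s] is negligible against
   [Gamma_fn s >= y^(s-1) e^(-y-1)]. *)
Lemma filterlim_upper_inc_gamma_div_Gamma_fn y : 0 < y ->
  filterlim (fun s => upper_inc_gamma s y / Gamma_fn s) (Rbar_locally p_infty) (locally 1).
Proof.
  intros Hy.
  assert (H : filterlim (fun s => upper_inc_gamma s y / Gamma_fn s - 1)
                (Rbar_locally p_infty) (locally 0)).
  { apply (filterlim_pinfty_0_of_bound _ (y * exp (y + 1))). intros s Hs.
    pose proof (Gamma_fn_pos s ltac:(lra)). pose proof (lower_inc_gamma_le s y ltac:(lra) Hy).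
    pose proof (lower_inc_gamma_ge_0 s y ltac:(lra) Hy). pose proof (Gamma_fn_ge s y Hs Hy).
    replace (upper_inc_gamma s y / Gamma_fn s - 1) with (- (lower_inc_gamma s y / Gamma_fn s))
      by (unfold lower_inc_gamma; field; lra).
    rewrite Rabs_Ropp, Rabs_right by (apply Rle_ge, Rdiv_le_0_compat; lra).
    assert (Hys : Rpower y s = Rpower y (s - 1) * y)
      by (rewrite <- (Rpower_1 y) at 3 by exact Hy; rewrite <- Rpower_plus; f_equal; ring).
    rewrite Hys in *. set (P := Rpower y (s - 1)) in *.
    assert (HP : 0 < P) by apply exp_pos. pose proof (exp_pos (- (y + 1))).
    apply Rle_trans with (P * y / s * / (P * exp (- (y + 1)))).
    - apply Rmult_le_compat; [lra | apply Rlt_le, Rinv_0_lt_compat; lra | lra |].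
      apply Rinv_le_contravar; [apply Rmult_lt_0_compat |]; lra.
    - right. rewrite exp_Ropp. field. pose proof (exp_pos (y + 1)). repeat split; lra.
  }
  pose proof (filterlim_Rplus _ _ _ _ _ H (filterlim_const 1)) as H1.
  rewrite Rplus_0_l in H1. revert H1. apply filterlim_ext. intros s. ring.
Qed.

Lemma exp_convex a b t : 0 <= t <= 1 -> exp (t * a + (1 - t) * b) <= t * exp a + (1 - t) * exp b.
Proof.
  intros Ht. set (m := t * a + (1 - t) * b).
  (* the tangent lines of [exp] at [m] lie below it *)
  assert (Ha : exp m * (1 + (a - m)) <= exp a).
  { replace (exp a) with (exp m * exp (a - m)) by (rewrite <- exp_plus; f_equal; ring).
    apply Rmult_le_compat_l; [apply Rlt_le, exp_pos | apply exp_ineq1_le]. }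
  assert (Hb : exp m * (1 + (b - m)) <= exp b).
  { replace (exp b) with (exp m * exp (b - m)) by (rewrite <- exp_plus; f_equal; ring).
    apply Rmult_le_compat_l; [apply Rlt_le, exp_pos | apply exp_ineq1_le]. }
  replace (exp m) with (t * (exp m * (1 + (a - m))) + (1 - t) * (exp m * (1 + (b - m))))
    by (unfold m; ring).
  nra.
Qed.

Lemma gamma_kernel_convex s1 s2 t x : 0 <= t <= 1 ->
  gamma_kernel (t * s1 + (1 - t) * s2) x <= t * gamma_kernel s1 x + (1 - t) * gamma_kernel s2 x.
Proof.
  intros Ht. unfold gamma_kernel, Rpower.
  replace ((t * s1 + (1 - t) * s2 - 1) * ln x)
    with (t * ((s1 - 1) * ln x) + (1 - t) * ((s2 - 1) * ln x)) by ring.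
  pose proof (exp_convex ((s1 - 1) * ln x) ((s2 - 1) * ln x) t Ht) as H.
  apply (Rmult_le_compat_r (exp (- x))) in H; [lra | apply Rlt_le, exp_pos].
Qed.

Lemma convex_on_gamma_integral (Fa Fb : (R -> Prop) -> Prop)
  {FFa : ProperFilter Fa} {FFb : ProperFilter Fb} (I : R -> R) b :
  filter_prod Fa Fb (fun ab => 0 < fst ab <= snd ab) ->
  (forall s, 0 < s -> is_RInt_gen (gamma_kernel s) Fa Fb (I s)) -> convex_on 0 b I.
Proof.
  intros Hpos HI u v t Hu Hv Ht.
  apply (is_RInt_gen_le Fa Fb Hpos (gamma_kernel (t * u + (1 - t) * v))
           (fun x => t * gamma_kernel u x + (1 - t) * gamma_kernel v x)).
  - intros x _. split; [apply Rlt_le, gamma_kernel_pos | apply gamma_kernel_convex, Ht].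
  - apply HI. destruct (Req_dec t 0); [subst; lra | nra].
  - apply (is_RInt_gen_plus (V := R_NormedModule));
      apply (is_RInt_gen_scal (V := R_NormedModule)), HI; tauto.
Qed.

Lemma Gamma_fn_continuous s : 0 < s -> continuous Gamma_fn s.
Proof.
  intros Hs. apply (convex_on_continuous 0 (s + 1)); [| lra].
  apply (convex_on_gamma_integral _ _ _ _ filter_prod_at_right_0_pinfty is_RInt_gen_Gamma_fn).
Qed.

Lemma upper_inc_gamma_continuous s y : 0 < s -> 0 < y -> continuous (fun s => upper_inc_gamma s y) s.
Proof.
  intros Hs Hy. apply (convex_on_continuous 0 (s + 1)); [| lra].
  apply (convex_on_gamma_integral _ _ _ _ (filter_prod_at_point_pinfty y Hy)).
  intros; apply is_RInt_gen_upper_inc_gamma, Hy.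
Qed.

Definition exp_partial (k : nat) (y : R) : R := sum_f_R0 (fun j => y ^ j / INR (fact j)) k.

Lemma is_derive_exp_partial k t : is_derive (exp_partial (S k)) t (exp_partial k t).
Proof.
  induction k as [| k IH].
  - unfold exp_partial. simpl. auto_derive; [auto | field].
  - apply (is_derive_ext (fun t => exp_partial (S k) t + / INR (fact (S (S k))) * t ^ S (S k))).
    { intros x. unfold exp_partial. rewrite (tech5 _ (S k)). unfold Rdiv.
      apply Rplus_eq_compat_l, Rmult_comm. }
    unfold exp_partial at 2. rewrite tech5.
    apply (@is_derive_plus R_AbsRing R_NormedModule); [exact IH |].
    replace (t ^ S k / INR (fact (S k)))
      with (/ INR (fact (S (S k))) * (INR (S (S k)) * 1 * t ^ pred (S (S k))))
      by (rewrite (fact_simpl (S k)), mult_INR; simpl pred; field;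
          split; [apply INR_fact_neq_0 | apply not_0_INR; lia]).
    apply is_derive_scal, is_derive_pow, (@is_derive_id R_AbsRing).
Qed.

Lemma exp_partial_0 k : exp_partial k 0 = 1.
Proof.
  induction k as [| k IH]; unfold exp_partial in *; [simpl; field |].
  rewrite tech5, IH. simpl. unfold Rdiv. ring.
Qed.

Lemma exp_partial_ge_0 k y : 0 <= y -> 0 <= exp_partial k y.
Proof.
  intros Hy. apply cond_pos_sum. intros j.
  apply Rdiv_le_0_compat; [apply pow_le, Hy | apply lt_0_INR, lt_O_fact].
Qed.

Lemma exp_partial_le_pow k t : 1 <= t -> exp_partial k t <= INR (S k) * t ^ k.
Proof.
  intros Ht. induction k as [| k IH]; unfold exp_partial in *; [simpl; lra |]. rewrite tech5.
  assert (Htk : t ^ k <= t ^ S k) by (simpl; pose proof (pow_le t k ltac:(lra)); nra).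
  assert (Hf : t ^ S k / INR (fact (S k)) <= t ^ S k).
  { unfold Rdiv. rewrite <- (Rmult_1_r (t ^ S k)) at 2. apply Rmult_le_compat_l; [apply pow_le; lra |].
    rewrite <- Rinv_1. apply Rinv_le_contravar; [lra | apply (le_INR 1), lt_O_fact]. }
  rewrite (S_INR (S k)). pose proof (pos_INR (S k)). nra.
Qed.

(* A primitive of [t^k e^(-t)], found by repeated integration by parts. *)
Definition gamma_kernel_nat_primitive (k : nat) (t : R) : R :=
  - (exp (- t) * INR (fact k) * exp_partial k t).

Lemma is_derive_gamma_kernel_nat_primitive k t :
  is_derive (gamma_kernel_nat_primitive k) t (exp (- t) * t ^ k).
Proof.
  unfold gamma_kernel_nat_primitive. destruct k as [| k].
  - unfold exp_partial. simpl. auto_derive; [auto | field].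
  - apply (is_derive_ext (fun t => (-1 * INR (fact (S k))) * (exp (- t) * exp_partial (S k) t)));
      [intros; simpl; ring |].
    replace (exp (- t) * t ^ S k)
      with ((-1 * INR (fact (S k))) * (- exp (- t) * exp_partial (S k) t + exp (- t) * exp_partial k t))
      by (unfold exp_partial; rewrite tech5, (fact_simpl k), mult_INR; field;
          split; [apply INR_fact_neq_0 | apply not_0_INR; lia]).
    apply is_derive_scal, (@is_derive_mult R_AbsRing (fun x => exp (- x)) (exp_partial (S k)) t);
      [auto_derive; auto; ring | apply is_derive_exp_partial | intros; apply Rmult_comm].
Qed.

Lemma filterlim_gamma_kernel_nat_primitive_pinfty k :
  filterlim (gamma_kernel_nat_primitive k) (Rbar_locally p_infty) (locally 0).
Proof.
  apply (filterlim_pinfty_0_of_bound _ (INR (fact k) * INR (S k) * INR (fact (S k)))).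
  intros t Ht. unfold gamma_kernel_nat_primitive. rewrite Rabs_Ropp.
  pose proof (exp_partial_ge_0 k t ltac:(lra)). pose proof (exp_pos (- t)). pose proof (INR_fact_lt_0 k).
  rewrite Rabs_right by (apply Rle_ge, Rmult_le_pos; [apply Rmult_le_pos |]; lra).
  pose proof (exp_partial_le_pow k t Ht). pose proof (pow_mul_exp_neg_le k 1 t ltac:(lra)) as Hexp.
  rewrite Nat.add_1_r, pow_1 in Hexp. pose proof (pos_INR (S k)).
  replace (INR (fact k) * INR (S k) * INR (fact (S k)) / t)
    with (INR (fact k) * INR (S k) * (INR (fact (S k)) / t)) by (field; lra).
  apply Rle_trans with (INR (fact k) * INR (S k) * (t ^ k * exp (- t))).
  - replace (exp (- t) * INR (fact k) * exp_partial k t)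
      with (INR (fact k) * (exp_partial k t * exp (- t))) by ring.
    rewrite Rmult_assoc. apply Rmult_le_compat_l; [lra |].
    rewrite <- Rmult_assoc. apply Rmult_le_compat_r; lra.
  - apply Rmult_le_compat_l; [nra | exact Hexp].
Qed.

Lemma is_RInt_gen_gamma_kernel_nat k (Fa : (R -> Prop) -> Prop) {FFa : ProperFilter Fa} la :
  Fa (fun a => 0 < a) -> filterlim (gamma_kernel_nat_primitive k) Fa (locally la) ->
  is_RInt_gen (gamma_kernel (INR (S k))) Fa (Rbar_locally p_infty) (- la).
Proof.
  intros Hpos Hla.
  apply (is_RInt_gen_ext (fun t => exp (- t) * t ^ k)).
  - apply (Filter_prod _ _ _ _ (fun b => 0 < b) Hpos); [exists 0; auto |].
    intros a b Ha Hb x Hx. simpl in Hx. symmetry. apply gamma_kernel_nat.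
    apply (Rmin_glb_lt_le 0 a b); [exact Ha | exact Hb | lra].
  - replace (- la) with (0 - la) by ring.
    apply (is_RInt_gen_of_antiderivative (gamma_kernel_nat_primitive k) _ Fa (Rbar_locally p_infty));
      [exact Hpos | exists 0; auto | intros; apply is_derive_gamma_kernel_nat_primitive | | exact Hla |
       apply filterlim_gamma_kernel_nat_primitive_pinfty].
    intros x _. apply continuous_of_ex_derive. auto_derive. auto.
Qed.

Lemma Gamma_fn_nat k : Gamma_fn (INR (S k)) = INR (fact k).
Proof.
  change (Gamma_fn (INR (S k)))
    with (RInt_gen (gamma_kernel (INR (S k))) (at_right 0) (Rbar_locally p_infty)).
  replace (INR (fact k)) with (- gamma_kernel_nat_primitive k 0)
    by (unfold gamma_kernel_nat_primitive; rewrite exp_partial_0, Ropp_0, exp_0; ring).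
  apply is_RInt_gen_unique, (is_RInt_gen_gamma_kernel_nat k (at_right 0)); [apply at_right_0_pos |].
  apply filterlim_at_right_of_continuous, continuous_of_ex_derive.
  eexists; apply is_derive_gamma_kernel_nat_primitive.
Qed.

Lemma upper_inc_gamma_nat k y : 0 < y ->
  upper_inc_gamma (INR (S k)) y = exp (- y) * INR (fact k) * exp_partial k y.
Proof.
  intros Hy.
  change (upper_inc_gamma (INR (S k)) y)
    with (RInt_gen (gamma_kernel (INR (S k))) (at_point y) (Rbar_locally p_infty)).
  replace (exp (- y) * INR (fact k) * exp_partial k y) with (- gamma_kernel_nat_primitive k y)
    by (unfold gamma_kernel_nat_primitive; ring).
  apply is_RInt_gen_unique, (is_RInt_gen_gamma_kernel_nat k (at_point y));
    [exact Hy | apply filterlim_at_point].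
Qed.

(** * The exponential series and the Bessel function [I0] *)

Lemma is_series_exp u : is_series (fun k => u ^ k / INR (fact k)) (exp u).
Proof.
  refine (is_series_ext _ _ _ _ (is_exp_Reals u)). intros n.
  rewrite pow_n_pow. cbn. unfold Rdiv. ring.
Qed.

Lemma is_series_Reals_sum (a : nat -> R) l :
  is_series a l <-> filterlim (fun N => sum_f_R0 a N) eventually (locally l).
Proof. split; apply filterlim_ext; intros; rewrite sum_n_Reals; reflexivity. Qed.

Lemma sum_mul_partial_sum (a : nat -> R) N :
  2 * sum_f_R0 (fun k => a k * sum_f_R0 a k) N = sum_f_R0 a N ^ 2 + sum_f_R0 (fun k => a k ^ 2) N.
Proof.
  induction N as [| N IH]; [simpl; ring |]. rewrite !tech5, Rmult_plus_distr_l, IH. simpl; ring.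
Qed.

Lemma is_series_mul_partial_sum (a : nat -> R) A B :
  is_series a A -> is_series (fun k => a k ^ 2) B ->
  is_series (fun k => a k * sum_f_R0 a k) ((A ^ 2 + B) / 2).
Proof.
  intros HA HB. apply is_series_Reals_sum.
  apply (filterlim_ext (fun N => (sum_f_R0 a N * sum_f_R0 a N + sum_f_R0 (fun k => a k ^ 2) N) * / 2)).
  { intros N. pose proof (sum_mul_partial_sum a N). simpl in *. lra. }
  replace ((A ^ 2 + B) / 2) with ((A * A + B) * / 2) by (unfold Rdiv; ring).
  apply is_series_Reals_sum in HA. apply is_series_Reals_sum in HB.
  apply (filterlim_Rmult eventually); [| apply filterlim_const].
  apply (filterlim_Rplus eventually); [apply (filterlim_Rmult eventually) |]; assumption.
Qed.

Lemma I0_double u : I0 (2 * u) = Series (fun k => (u ^ k / INR (fact k)) ^ 2).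
Proof.
  apply Series_ext. intros k. replace (2 * u / 2) with u by field.
  rewrite Nat.mul_comm, pow_mult. unfold Rdiv. rewrite Rpow_mult_distr, pow_inv. reflexivity.
Qed.

Lemma ex_series_sq_exp_terms u : 0 <= u -> ex_series (fun k => (u ^ k / INR (fact k)) ^ 2).
Proof.
  intros Hu.
  apply (@ex_series_le R_AbsRing R_CompleteNormedModule _ (fun k => exp u * (u ^ k / INR (fact k)))).
  - intros k. change (Rabs ((u ^ k / INR (fact k)) ^ 2) <= exp u * (u ^ k / INR (fact k))).
    assert (H0 : 0 <= u ^ k / INR (fact k))
      by (apply Rdiv_le_0_compat; [apply pow_le, Hu | apply lt_0_INR, lt_O_fact]).
    rewrite Rabs_right by (apply Rle_ge, pow_le, H0). simpl. rewrite Rmult_1_r.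
    apply Rmult_le_compat_r; [exact H0 | apply pow_div_fact_le_exp, Hu].
  - apply (@ex_series_scal_l R_AbsRing R_NormedModule). eexists; apply is_series_exp.
Qed.

Lemma is_series_exp_partial u : 0 <= u ->
  is_series (fun k => u ^ k / INR (fact k) * exp_partial k u) ((exp (2 * u) + I0 (2 * u)) / 2).
Proof.
  intros Hu.
  replace (exp (2 * u)) with (exp u ^ 2) by (simpl; rewrite Rmult_1_r, <- exp_plus; f_equal; ring).
  rewrite I0_double. apply is_series_mul_partial_sum; [apply is_series_exp |].
  apply Series_correct, ex_series_sq_exp_terms, Hu.
Qed.

(* [I0 z] is the power series with these coefficients, evaluated at [(z/2)^2]. *)
Lemma CV_radius_I0 : CV_radius (fun k => / INR (fact k) ^ 2) = p_infty.
Proof.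
  apply CV_radius_infinite_DAlembert.
  - intros n. apply Rinv_neq_0_compat, pow_nonzero, INR_fact_neq_0.
  - apply (is_lim_seq_le_le (fun _ => 0) _ (fun n => / INR (S n))).
    + intros n. rewrite fact_simpl, mult_INR.
      assert (H1 : 0 < INR (fact n)) by apply lt_0_INR, lt_O_fact.
      assert (H2 : 1 <= INR (S n)) by (apply (le_INR 1); lia).
      replace (/ (INR (S n) * INR (fact n)) ^ 2 / / INR (fact n) ^ 2) with (/ INR (S n) * / INR (S n))
        by (field; lra).
      assert (Hr : 0 < / INR (S n) <= 1)
        by (split; [apply Rinv_0_lt_compat; lra | rewrite <- Rinv_1; apply Rinv_le_contravar; lra]).
      set (r := / INR (S n)) in *. rewrite Rabs_right by nra. split; nra.
    + apply is_lim_seq_const.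
    + apply (is_lim_seq_incr_1 (fun n => / INR n)).
      replace (Finite 0) with (Rbar_inv p_infty) by reflexivity.
      apply is_lim_seq_inv; [apply is_lim_seq_INR | discriminate].
Qed.

Lemma I0_continuous z : continuous I0 z.
Proof.
  apply (continuous_ext (fun z => PSeries (fun k => / INR (fact k) ^ 2) ((z / 2) ^ 2))).
  { intros w. apply Series_ext. intros k.
    rewrite <- pow_mult, Nat.mul_comm, pow_mult. cbn. unfold Rdiv. ring. }
  apply (continuous_comp (fun z => (z / 2) ^ 2) (PSeries _)).
  - apply continuous_of_ex_derive. auto_derive. auto.
  - apply continuity_pt_filterlim, PSeries_continuity. rewrite CV_radius_I0. exact I.
Qed.

(** * The function [H] and the limits of [EH] *)

Definition ztp_scale (lam : R) : R := exp (- lam) / (1 - exp (- lam)).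

Lemma exp_neg_lt_1 lam : 0 < lam -> exp (- lam) < 1.
Proof. intros Hl. rewrite <- exp_0. apply exp_increasing. lra. Qed.

Lemma ztp_scale_pos lam : 0 < lam -> 0 < ztp_scale lam.
Proof. intros Hl. pose proof (exp_neg_lt_1 lam Hl). apply Rdiv_lt_0_compat; [apply exp_pos | lra]. Qed.

Lemma ztp_scale_mul_exp lam : 0 < lam -> ztp_scale lam * (exp lam - 1) = 1.
Proof.
  intros Hl. pose proof (exp_neg_lt_1 lam Hl). pose proof (exp_pos (- lam)).
  unfold ztp_scale. replace (exp lam) with (/ exp (- lam)) by (rewrite exp_Ropp, Rinv_inv; reflexivity).
  field. lra.
Qed.

Lemma exp_mul_INR a n : exp (a * INR n) = exp a ^ n.
Proof.
  induction n as [| n IH]; [rewrite Rmult_0_r; apply exp_0 |].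
  rewrite S_INR, Rmult_plus_distr_l, exp_plus, IH, Rmult_1_r. simpl. ring.
Qed.

Section Hfun.

Variables lam x : R.
Hypothesis Hlam : 0 < lam.

Let u := lam * exp (- x).

Lemma Hfun_eq s : Hfun lam x s = ztp_scale lam * (exp u * (upper_inc_gamma s u / Gamma_fn s) - 1).
Proof. unfold Hfun, ztp_scale, u, Rdiv. ring. Qed.

Lemma mul_exp_neg_pos : 0 < u.
Proof. apply Rmult_lt_0_compat; [exact Hlam | apply exp_pos]. Qed.

Lemma Rabs_Hfun_le s : 0 < s -> Rabs (Hfun lam x s) <= ztp_scale lam * (exp u + 1).
Proof.
  intros Hs. rewrite Hfun_eq.
  pose proof (upper_inc_gamma_div_Gamma_fn_bounds s u Hs mul_exp_neg_pos).
  pose proof (ztp_scale_pos lam Hlam). pose proof (exp_pos u).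
  rewrite Rabs_mult, (Rabs_right (ztp_scale lam)) by lra.
  apply Rmult_le_compat_l; [lra |]. apply Rabs_le. split; nra.
Qed.

Lemma Hfun_nat k : Hfun lam x (INR (S k)) = ztp_scale lam * (exp_partial k u - 1).
Proof.
  rewrite Hfun_eq, Gamma_fn_nat, upper_inc_gamma_nat by exact mul_exp_neg_pos.
  rewrite exp_Ropp. field. split; [apply Rgt_not_eq, exp_pos | apply INR_fact_neq_0].
Qed.

Lemma Hfun_continuous s0 : 0 < s0 -> continuous (Hfun lam x) s0.
Proof.
  intros Hs.
  apply (continuous_ext (fun s => ztp_scale lam * (exp u * (upper_inc_gamma s u * / Gamma_fn s) - 1))).
  { intros s. rewrite Hfun_eq. reflexivity. }
  apply (filterlim_Rmult (locally s0)); [apply filterlim_const |].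
  apply (filterlim_Rminus (locally s0)); [| apply filterlim_const].
  apply (filterlim_Rmult (locally s0)); [apply filterlim_const |].
  apply (filterlim_Rmult (locally s0));
    [apply upper_inc_gamma_continuous; [exact Hs | exact mul_exp_neg_pos] |].
  apply (filterlim_continuous_comp (locally s0) Gamma_fn Rinv); [| apply Gamma_fn_continuous, Hs].
  apply continuous_Rinv, Rgt_not_eq, Gamma_fn_pos, Hs.
Qed.

Lemma filterlim_Hfun_pinfty :
  filterlim (Hfun lam x) (Rbar_locally p_infty) (locally (ztp_scale lam * (exp u - 1))).
Proof.
  apply (filterlim_ext (fun s => ztp_scale lam * (exp u * (upper_inc_gamma s u / Gamma_fn s) - 1))).
  { intros s. rewrite Hfun_eq. reflexivity. }
  apply (filterlim_Rmult (Rbar_locally p_infty)); [apply filterlim_const |].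
  apply (filterlim_Rminus (Rbar_locally p_infty)); [| apply filterlim_const].
  pose proof (filterlim_Rmult (Rbar_locally p_infty) _ _ _ _ (filterlim_const (exp u))
                (filterlim_upper_inc_gamma_div_Gamma_fn u mul_exp_neg_pos)) as H.
  rewrite Rmult_1_r in H. exact H.
Qed.

Lemma Xstar_pmf_mul_exp k :
  Xstar_pmf lam k * exp (- x * INR (S k)) = exp (- lam) / lam * u * (u ^ k / INR (fact k)).
Proof.
  unfold Xstar_pmf, u. rewrite (exp_mul_INR (- x)), Rpow_mult_distr. simpl.
  field. split; [apply INR_fact_neq_0 | lra].
Qed.

Lemma is_series_Xstar_pmf_mul_exp :
  is_series (fun k => Xstar_pmf lam k * exp (- x * INR (S k))) (exp (- lam) / lam * u * exp u).
Proof.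
  apply (is_series_ext (fun k => scal (exp (- lam) / lam * u) (u ^ k / INR (fact k)))).
  - intros k. rewrite Xstar_pmf_mul_exp. reflexivity.
  - apply (@is_series_scal R_AbsRing R_NormedModule), is_series_exp.
Qed.

Lemma Xstar_pmf_mul_exp_ge_0 k : 0 <= Xstar_pmf lam k * exp (- x * INR (S k)).
Proof.
  unfold Xstar_pmf. apply Rmult_le_pos; [| apply Rlt_le, exp_pos].
  apply Rdiv_le_0_compat; [apply Rmult_le_pos; [apply Rlt_le, exp_pos | apply pow_le; lra] |].
  apply lt_0_INR, lt_O_fact.
Qed.

(* Tannery's theorem applies since [|H| <= ztp_scale lam * (e^u + 1)] uniformly in [s]. *)
Lemma filterlim_EH (F : (R -> Prop) -> Prop) {FF : Filter F} (a0 : nat -> R) :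
  F (fun eps => 0 < eps) ->
  (forall k, filterlim (fun eps => Hfun lam x (eps * INR (S k))) F (locally (a0 k))) ->
  (forall k, Rabs (a0 k) <= ztp_scale lam * (exp u + 1)) ->
  filterlim (fun eps => EH lam eps x) F
    (locally (Series (fun k => Xstar_pmf lam k * exp (- x * INR (S k)) * a0 k))).
Proof.
  intros Hpos Hlim Hb.
  apply (filterlim_Series_dominated F _ _
           (fun k => Xstar_pmf lam k * exp (- x * INR (S k)) * (ztp_scale lam * (exp u + 1)))).
  - apply ex_series_scal_r. eexists; apply is_series_Xstar_pmf_mul_exp.
  - intros k. apply (filterlim_Rmult F); [apply filterlim_const | apply Hlim].
  - refine (filter_imp _ _ _ Hpos). intros eps He k.
    rewrite Rabs_mult, Rabs_right by apply Rle_ge, Xstar_pmf_mul_exp_ge_0.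
    apply Rmult_le_compat_l; [apply Xstar_pmf_mul_exp_ge_0 |].
    apply Rabs_Hfun_le, Rmult_lt_0_compat; [exact He | apply lt_0_INR; lia].
  - intros k. rewrite Rabs_mult, Rabs_right by apply Rle_ge, Xstar_pmf_mul_exp_ge_0.
    apply Rmult_le_compat_l; [apply Xstar_pmf_mul_exp_ge_0 | apply Hb].
Qed.

Lemma is_lim_EH_1 : is_lim (fun eps => EH lam eps x) 1
  (exp (- lam) / lam * u * ztp_scale lam * ((exp (2 * u) + I0 (2 * u)) / 2 - exp u)).
Proof.
  assert (Hid : filterlim (fun eps => eps) (locally' 1) (locally 1))
    by exact (filterlim_filter_le_1 _ (@filter_le_within R (locally 1) _ (fun v => v <> 1))
                (filterlim_id _ (locally 1))).
  replace (exp (- lam) / lam * u * ztp_scale lam * ((exp (2 * u) + I0 (2 * u)) / 2 - exp u))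
    with (Series (fun k => Xstar_pmf lam k * exp (- x * INR (S k))
                           * (ztp_scale lam * (exp_partial k u - 1)))).
  - apply (filterlim_EH (locally' 1)).
    + exists (mkposreal (1 / 2) ltac:(lra)). intros y Hy _. change (Rabs (y - 1) < 1 / 2) in Hy.
      apply Rabs_def2 in Hy. lra.
    + intros k. rewrite <- Hfun_nat.
      apply (filterlim_continuous_comp (locally' 1) (fun eps => eps * INR (S k)));
        [apply Hfun_continuous, lt_0_INR; lia |].
      pose proof (filterlim_Rmult (locally' 1) _ _ _ _ Hid (filterlim_const (INR (S k)))) as H.
      rewrite Rmult_1_l in H. exact H.
    + intros k. rewrite <- Hfun_nat. apply Rabs_Hfun_le, lt_0_INR. lia.
  - apply is_series_unique.
    apply (is_series_ext (fun k => scal (exp (- lam) / lam * u * ztp_scale lam)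
             (plus (u ^ k / INR (fact k) * exp_partial k u) (opp (u ^ k / INR (fact k)))))).
    + intros k. rewrite Xstar_pmf_mul_exp. cbn. ring.
    + apply (@is_series_scal R_AbsRing R_NormedModule), (@is_series_minus R_AbsRing R_NormedModule).
      * apply is_series_exp_partial, Rlt_le, mul_exp_neg_pos.
      * apply is_series_exp.
Qed.

Lemma is_lim_EH_pinfty : is_lim (fun eps => EH lam eps x) p_infty
  (exp (- lam) / lam * u * exp u * (ztp_scale lam * (exp u - 1))).
Proof.
  rewrite <- (is_series_unique _ _ (is_series_Xstar_pmf_mul_exp)), <- Series_scal_r.
  apply (filterlim_EH (Rbar_locally p_infty)); [exists 0; auto | |].
  - intros k. refine (filterlim_comp _ _ _ _ _ _ _ _ _ filterlim_Hfun_pinfty).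
    apply filterlim_Rmult_pos_pinfty, lt_0_INR. lia.
  - intros k. pose proof (ztp_scale_pos lam Hlam). pose proof (exp_pos u).
    rewrite Rabs_mult, Rabs_right by lra. apply Rmult_le_compat_l; [lra |]. apply Rabs_le; lra.
Qed.

End Hfun.

(** * The integrals [R_1] and [R_oo] *)

Lemma ztp_mul_exp lam x k : 0 < lam ->
  exp (- x * INR (S k)) * ztp lam (S k) = ztp_scale lam * ((lam * exp (- x)) ^ S k / INR (fact (S k))).
Proof.
  intros Hl. unfold ztp, ztp_scale. rewrite exp_mul_INR, Rpow_mult_distr.
  pose proof (exp_neg_lt_1 lam Hl). field. split; [apply INR_fact_neq_0 | lra].
Qed.

Lemma LF_eq lam x : 0 < lam -> LF lam x = ztp_scale lam * (exp (lam * exp (- x)) - 1).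
Proof.
  intros Hl. set (u := lam * exp (- x)). apply is_series_unique.
  apply (is_series_ext (fun k => scal (ztp_scale lam) (u ^ S k / INR (fact (S k))))).
  { intros k. symmetry. apply ztp_mul_exp, Hl. }
  apply (@is_series_scal R_AbsRing R_NormedModule), (is_series_incr_1 (fun k => u ^ k / INR (fact k))).
  pose proof (is_series_exp u) as H.
  replace (exp u) with (plus (exp u - 1) (u ^ 0 / INR (fact 0))) in H by (cbn; field).
  exact H.
Qed.

Lemma is_RInt_exp_mul_pow_exp_sub_1 j a :
  is_RInt (fun u => exp u * (exp u - 1) ^ j) 0 a ((exp a - 1) ^ S j / INR (S j)).
Proof.
  replace ((exp a - 1) ^ S j / INR (S j))
    with (minus ((exp a - 1) ^ S j / INR (S j)) ((exp 0 - 1) ^ S j / INR (S j)))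
    by (cbn -[INR pow]; rewrite exp_0, Rminus_eq_0, pow_i by lia;
        field; apply not_0_INR; lia).
  apply (is_RInt_derive (fun u => (exp u - 1) ^ S j / INR (S j))); intros x _.
  - apply (is_derive_ext (fun u => / INR (S j) * (exp u - 1) ^ S j));
      [intros; unfold Rdiv; apply Rmult_comm |].
    replace (exp x * (exp x - 1) ^ j) with (/ INR (S j) * (INR (S j) * exp x * (exp x - 1) ^ pred (S j)))
      by (simpl pred; field; apply not_0_INR; lia).
    apply is_derive_scal, (is_derive_pow (fun u => exp u - 1)). auto_derive; [auto | ring].
  - apply continuous_of_ex_derive. auto_derive. auto.
Qed.

Lemma I0_mul_continuous a z : continuous (fun y => I0 (a * y)) z.
Proof.
  apply (filterlim_continuous_comp (locally z) (fun y => a * y) I0); [apply I0_continuous |].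
  apply continuous_of_ex_derive. auto_derive. auto.
Qed.

Lemma is_RInt_I0_mul_pow_exp_sub_1 lam m :
  is_RInt (fun u => I0 (2 * u) * (exp u - 1) ^ m) 0 lam
    (lam * RInt (fun y => I0 (2 * lam * y) * (exp (lam * y) - 1) ^ m) 0 1).
Proof.
  set (f := fun u => I0 (2 * u) * (exp u - 1) ^ m).
  assert (Hf : forall u, continuous f u).
  { intros u. apply (continuous_mult (fun u => I0 (2 * u)) (fun u => (exp u - 1) ^ m)).
    - apply I0_mul_continuous.
    - apply continuous_of_ex_derive. auto_derive. auto. }
  assert (Hint : ex_RInt f 0 lam)
    by (apply (@ex_RInt_continuous R_CompleteNormedModule); intros; apply Hf).
  assert (Hcomp := is_RInt_comp_lin f lam 0 0 1 (RInt f 0 lam)).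
  rewrite Rmult_0_r, Rmult_1_r, !Rplus_0_r in Hcomp. specialize (Hcomp (RInt_correct _ _ _ Hint)).
  assert (Hscaled : is_RInt (fun y => scal lam (f (lam * y + 0))) 0 1
                     (lam * RInt (fun y => I0 (2 * lam * y) * (exp (lam * y) - 1) ^ m) 0 1)).
  { apply (is_RInt_ext (fun y => scal lam (I0 (2 * lam * y) * (exp (lam * y) - 1) ^ m))).
    { intros y _. unfold f. rewrite Rplus_0_r, Rmult_assoc. reflexivity. }
    apply (is_RInt_scal (V := R_NormedModule)), (RInt_correct (V := R_CompleteNormedModule)).
    apply (@ex_RInt_continuous R_CompleteNormedModule). intros z _.
    apply (continuous_mult (fun y => I0 (2 * lam * y)) (fun y => (exp (lam * y) - 1) ^ m)).
    - apply (continuous_ext (fun y => I0 ((2 * lam) * y))); [reflexivity | apply I0_mul_continuous].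
    - apply continuous_of_ex_derive. auto_derive. auto. }
  replace (lam * _) with (RInt f 0 lam); [apply (RInt_correct (V := R_CompleteNormedModule)), Hint |].
  rewrite <- (is_RInt_unique _ _ _ _ Hcomp). apply is_RInt_unique, Hscaled.
Qed.

(* Densities in the variable [u = lam e^(-x)]: the integrands equal [density u * u]. *)
Definition R1_density (lam : R) (m : nat) (u : R) : R :=
  exp (- lam) / lam * ztp_scale lam * ((exp (2 * u) + I0 (2 * u)) / 2 - exp u)
  * (ztp_scale lam * (exp u - 1)) ^ m.

Definition Rinf_density (lam : R) (m : nat) (u : R) : R :=
  exp (- lam) / lam * exp u * (ztp_scale lam * (exp u - 1)) ^ S m.

Section Densities.

Variables (lam : R) (m : nat).
Hypothesis Hlam : 0 < lam.

Lemma R1_integrand_eq x :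
  R1_integrand lam (S (S m)) x = R1_density lam m (lam * exp (- x)) * (lam * exp (- x)).
Proof.
  unfold R1_integrand. rewrite (is_lim_unique _ _ _ (is_lim_EH_1 lam x Hlam)), LF_eq by exact Hlam.
  replace (S (S m) - 2)%nat with m by lia. unfold R1_density. simpl. field. lra.
Qed.

Lemma Rinf_integrand_eq x :
  Rinf_integrand lam (S (S m)) x = Rinf_density lam m (lam * exp (- x)) * (lam * exp (- x)).
Proof.
  unfold Rinf_integrand.
  rewrite (is_lim_unique _ _ _ (is_lim_EH_pinfty lam x Hlam)), LF_eq by exact Hlam.
  replace (S (S m) - 2)%nat with m by lia. unfold Rinf_density. simpl. field. lra.
Qed.

Lemma R1_density_continuous u : continuous (R1_density lam m) u.
Proof.
  assert (Hexp : forall a, continuous (fun v => exp (a * v)) u)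
    by (intros a; apply continuous_of_ex_derive; auto_derive; auto).
  apply (filterlim_Rmult (locally u));
    [| apply continuous_of_ex_derive; auto_derive; auto].
  apply (filterlim_Rmult (locally u)); [apply filterlim_const |].
  apply (filterlim_Rminus (locally u));
    [| apply (continuous_ext (fun v => exp (1 * v)));
       [intros; rewrite Rmult_1_l; reflexivity | apply Hexp]].
  apply (filterlim_Rmult (locally u)); [| apply filterlim_const].
  apply (filterlim_Rplus (locally u)); [apply Hexp |].
  apply I0_mul_continuous.
Qed.

Lemma Rinf_density_continuous u : continuous (Rinf_density lam m) u.
Proof. apply continuous_of_ex_derive. unfold Rinf_density. auto_derive. auto. Qed.

Lemma RInt_Rinf_density : RInt (Rinf_density lam m) 0 lam = (1 - exp (- lam)) / (INR (S (S m)) * lam).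
Proof.
  apply is_RInt_unique.
  apply (is_RInt_ext (fun u => scal (exp (- lam) / lam * ztp_scale lam ^ S m)
                                   (exp u * (exp u - 1) ^ S m))).
  { intros u _. unfold Rinf_density. rewrite Rpow_mult_distr. cbn -[pow]. ring. }
  replace ((1 - exp (- lam)) / (INR (S (S m)) * lam))
    with (scal (exp (- lam) / lam * ztp_scale lam ^ S m) ((exp lam - 1) ^ S (S m) / INR (S (S m)))).
  - apply (is_RInt_scal (V := R_NormedModule)), is_RInt_exp_mul_pow_exp_sub_1.
  - change (scal ?a ?b) with (a * b). match goal with |- ?a = ?b => change (@eq R a b) end.
    replace (exp (- lam) / lam * ztp_scale lam ^ S m * ((exp lam - 1) ^ S (S m) / INR (S (S m))))
      with (exp (- lam) / lam * (ztp_scale lam * (exp lam - 1)) ^ S m * (exp lam - 1) / INR (S (S m)))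
      by (rewrite Rpow_mult_distr; cbn [pow]; field; split; [apply not_0_INR; lia | lra]).
    rewrite ztp_scale_mul_exp, pow1, <- (Rinv_inv (exp lam)), <- exp_Ropp by exact Hlam.
    pose proof (exp_pos (- lam)). field. repeat split; try lra; apply not_0_INR; lia.
Qed.

(* [((e^(2u) + I0(2u))/2 - e^u) W^m = I0(2u) W^m / 2 + e^u (W^(m+1) - W^m) / 2] with [W = e^u - 1]. *)
Lemma is_RInt_R1_density :
  is_RInt (R1_density lam m) 0 lam
    (exp (- lam) / lam * ztp_scale lam ^ S m *
       (/ 2 * (lam * RInt (fun y => I0 (2 * lam * y) * (exp (lam * y) - 1) ^ m) 0 1)
        + / 2 * ((exp lam - 1) ^ S (S m) / INR (S (S m)) - (exp lam - 1) ^ S m / INR (S m)))).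
Proof.
  apply (is_RInt_ext (fun u => scal (exp (- lam) / lam * ztp_scale lam ^ S m)
           (plus (scal (/ 2) (I0 (2 * u) * (exp u - 1) ^ m))
                 (scal (/ 2) (minus (exp u * (exp u - 1) ^ S m) (exp u * (exp u - 1) ^ m)))))).
  { intros u _. unfold R1_density. rewrite Rpow_mult_distr.
    replace (exp (2 * u)) with (exp u * exp u) by (rewrite <- exp_plus; f_equal; ring).
    cbn -[pow I0]. cbn [pow]. match goal with |- ?a = ?b => change (@eq R a b) end. field. lra. }
  apply (is_RInt_scal (V := R_NormedModule)), (is_RInt_plus (V := R_NormedModule));
    apply (is_RInt_scal (V := R_NormedModule)).
  - apply is_RInt_I0_mul_pow_exp_sub_1.
  - apply (is_RInt_minus (V := R_NormedModule)); apply is_RInt_exp_mul_pow_exp_sub_1.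
Qed.

Lemma RInt_R1_density :
  RInt (R1_density lam m) 0 lam =
  exp (- INR (S (S m)) * lam) / (2 * (1 - exp (- lam)) ^ S m)
    * RInt (fun y => I0 (2 * lam * y) * (exp (lam * y) - 1) ^ m) 0 1
  + (exp (- lam) + INR (S (S m)) - 1) / (2 * INR (S (S m)) * (INR (S (S m)) - 1) * lam)
  - exp (- lam) / ((INR (S (S m)) - 1) * lam).
Proof.
  rewrite (is_RInt_unique _ _ _ _ is_RInt_R1_density).
  set (J := RInt _ 0 1). set (q := exp (- lam)). set (A := ztp_scale lam ^ S m).
  assert (Hq : 0 < q < 1) by (split; [apply exp_pos | apply exp_neg_lt_1, Hlam]).
  assert (HW : exp lam - 1 = (1 - q) / q)
    by (unfold q; rewrite exp_Ropp; field; apply Rgt_not_eq, exp_pos).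
  assert (HB : (exp lam - 1) ^ S m = / A).
  { unfold A. rewrite <- pow_inv. f_equal.
    pose proof (ztp_scale_pos lam Hlam).
    apply (Rmult_eq_reg_l (ztp_scale lam)); [| lra].
    rewrite ztp_scale_mul_exp, Rinv_r by (exact Hlam || lra). reflexivity. }
  assert (HA : q ^ S m = A * (1 - q) ^ S m)
    by (unfold A, ztp_scale; rewrite <- Rpow_mult_distr; f_equal; fold q; field; lra).
  assert (HA0 : 0 < A) by (apply pow_lt, ztp_scale_pos, Hlam).
  assert (Hom : 0 < (1 - q) ^ S m) by (apply pow_lt; lra).
  replace (exp (- INR (S (S m)) * lam)) with (q * q ^ S m)
    by (unfold q; rewrite <- exp_mul_INR, <- exp_plus, !S_INR; f_equal; ring).
  change ((exp lam - 1) ^ S (S m)) with ((exp lam - 1) * (exp lam - 1) ^ S m).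
  match goal with |- ?a = ?b => change (@eq R a b) end.
  rewrite HB, HW, HA, !S_INR. pose proof (pos_INR m). field. repeat split; lra.
Qed.

Lemma is_RInt_gen_R1_integrand :
  is_RInt_gen (R1_integrand lam (S (S m))) (at_right 0) (Rbar_locally p_infty)
    (RInt (R1_density lam m) 0 lam).
Proof.
  apply (is_RInt_gen_ext (fun x => R1_density lam m (lam * exp (- x)) * (lam * exp (- x)))).
  - apply filter_forall. intros ab x _. symmetry. apply R1_integrand_eq.
  - apply is_RInt_gen_comp_exp_neg, R1_density_continuous.
Qed.

Lemma is_RInt_gen_Rinf_integrand :
  is_RInt_gen (Rinf_integrand lam (S (S m))) (at_right 0) (Rbar_locally p_infty)
    (RInt (Rinf_density lam m) 0 lam).
Proof.
  apply (is_RInt_gen_ext (fun x => Rinf_density lam m (lam * exp (- x)) * (lam * exp (- x)))).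
  - apply filter_forall. intros ab x _. symmetry. apply Rinf_integrand_eq.
  - apply is_RInt_gen_comp_exp_neg, Rinf_density_continuous.
Qed.

End Densities.

Theorem mainTheorem6 (lam : R) (n : nat) (Hlam : 0 < lam) (Hn : (2 <= n)%nat) :
  (forall x, 0 < x -> ex_finite_lim (fun eps => EH lam eps x) 1) /\
  is_RInt_gen (R1_integrand lam n) (at_right 0) (Rbar_locally p_infty)
    (exp (- INR n * lam) / (2 * (1 - exp (- lam)) ^ (n - 1))
       * RInt (fun y => I0 (2 * lam * y) * (exp (lam * y) - 1) ^ (n - 2)) 0 1
     + (exp (- lam) + INR n - 1) / (2 * INR n * (INR n - 1) * lam)
     - exp (- lam) / ((INR n - 1) * lam)) /\
  (forall x, 0 < x -> ex_finite_lim (fun eps => EH lam eps x) p_infty) /\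
  is_RInt_gen (Rinf_integrand lam n) (at_right 0) (Rbar_locally p_infty)
    ((1 - exp (- lam)) / (INR n * lam)).
Proof.
  destruct n as [| [| m]]; [lia | lia |].
  replace (S (S m) - 1)%nat with (S m) by lia. replace (S (S m) - 2)%nat with m by lia.
  split; [| split; [| split]].
  - intros x _. eexists. apply is_lim_EH_1, Hlam.
  - rewrite <- RInt_R1_density by exact Hlam. apply is_RInt_gen_R1_integrand, Hlam.
  - intros x _. eexists. apply is_lim_EH_pinfty, Hlam.
  - rewrite <- RInt_Rinf_density by exact Hlam. apply is_RInt_gen_Rinf_integrand, Hlam.
Qed.
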